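(* Let $A$ be a nonempty linearly closed subset of the abstract linear space $LS^3$ which is neither a single point nor an abstract line. Then $A$ is not locally embedded in $\mathbb{C}$; that is, there is a point $x\in A$ such that no neighborhood of $x$ in $A$ admits a continuous injective map into $\mathbb{C}$.
   Context: $\mathbb{S}^3$ is the unit sphere of $\mathbb{C}^2$ (with the subspace topology). The abstract linear space $LS^3$ has point set $\mathbb{S}^3$ and abstract lines the sets $L\cap\mathbb{S}^3$ where $L$ is a complex affine line of $\mathbb{C}^2$ meeting $\mathbb{S}^3$ in more than one point (such a set is a round circle); any two distinct points of $\mathbb{S}^3$ lie on exactly one abstract line. A subset $A\subset\mathbb{S}^3$ is linearly closed if for any two distinct $x,y\in A$ the abstract line through $x$ and $y$ is contained in $A$. *)

From Stdlib Require Import Reals.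
From Coquelicot Require Import Coquelicot.
Open Scope R_scope.

Definition C2 : Type := (C * C)%type.

Definition sphere3 (p : C2) : Prop :=
  (Cmod (fst p)) ^ 2 + (Cmod (snd p)) ^ 2 = 1.

Definition dist2 (p q : C2) : R :=
  sqrt ((Cmod (fst p - fst q)%C) ^ 2 + (Cmod (snd p - snd q)%C) ^ 2).

Definition complex_affine_line (L : C2 -> Prop) : Prop :=
  exists a v : C2, v <> (@pair C C 0%C 0%C) /\
    forall p, L p <-> exists t : C, p = ((fst a + t * fst v)%C, (snd a + t * snd v)%C).

Definition abstract_line (l : C2 -> Prop) : Prop :=
  exists L, complex_affine_line L /\
    (exists x y : C2, x <> y /\ L x /\ sphere3 x /\ L y /\ sphere3 y) /\
    (forall p, l p <-> (L p /\ sphere3 p)).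

Definition linearly_closed (A : C2 -> Prop) : Prop :=
  (forall p, A p -> sphere3 p) /\
  (forall x y, A x -> A y -> x <> y ->
     forall l, abstract_line l -> l x -> l y -> forall p, l p -> A p).

Definition nbhd_in (A U : C2 -> Prop) (x : C2) : Prop :=
  (forall p, U p -> A p) /\ U x /\
  exists eps, 0 < eps /\ forall p, A p -> dist2 p x < eps -> U p.

Definition cont_inj_on (U : C2 -> Prop) (f : C2 -> C) : Prop :=
  (forall p q, U p -> U q -> f p = f q -> p = q) /\
  (forall p, U p -> forall eps, 0 < eps ->
     exists delta, 0 < delta /\
       forall q, U q -> dist2 q p < delta -> Cmod (f q - f p)%C < eps).

(* A linearly closed set containing two points and a point off the line
   through them is all of S^3: after a unitary change of coordinates the third
   point is e0 = (1, 0), and the complex lines through e0 are indexed by a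
   "slope" in C.  Three slopes that are not collinear in the real plane C can be
   realised by three points of S^3 lying on a common complex line, so the set of
   slopes whose whole fibre lies in the set is closed under adding a point not
   collinear with two of its members; from two distinct slopes this reaches
   every slope.

   So it suffices that no neighbourhood of a point of S^3, which contains a
   small 3-ball, embeds continuously and injectively into C.  If f did, then
   g p := f p - f (-p), with -p the reflection through the centre of the ball,
   would not vanish off the centre.  On a square loop around the centre g is
   odd, so it has odd winding number around 0; yet a cone over the loop
   avoiding the centre contracts it to a constant in C \ {0}.  Winding numbers
   are computed as sums of small angles on a fine grid. *)

From Stdlib Require Import Reals Lra Lia Psatz Classical ClassicalEpsilon.
From Coquelicot Require Import Coquelicot.
Open Scope R_scope.

(** * Winding of loops in C \ {0} *)

Definition cdot (a b : C) : R := fst a * fst b + snd a * snd b.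
Definition ccross (a b : C) : R := fst a * snd b - snd a * fst b.

(* [a] and [b] make an angle of less than [PI/4]; on such pairs [angle a b] is
   the signed angle from [a] to [b]. *)
Definition near_dir (a b : C) : Prop := Rabs (ccross a b) < cdot a b.
Definition angle (a b : C) : R := atan (ccross a b / cdot a b).

Lemma atan_lt_PI4 t : Rabs t < 1 -> -(PI/4) < atan t < PI/4.
Proof.
  intro H. apply Rabs_def2 in H.
  assert (atan (- (1)) < atan t) by (apply atan_increasing; lra).
  assert (atan t < atan 1) by (apply atan_increasing; lra).
  rewrite atan_opp, atan_1 in *. lra.
Qed.

Lemma atan_plus t1 t2 : Rabs t1 < 1 -> Rabs t2 < 1 ->
  atan t1 + atan t2 = atan ((t1 + t2) / (1 - t1 * t2)).
Proof.
  intros H1 H2.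
  pose proof (atan_lt_PI4 _ H1). pose proof (atan_lt_PI4 _ H2). pose proof PI_RGT_0.
  assert (cos_ne : forall x, -(PI/2) < x < PI/2 -> cos x <> 0)
    by (intros; apply Rgt_not_eq, cos_gt_0; lra).
  rewrite <- (atan_tan (atan t1 + atan t2)) by lra.
  apply Rabs_def2 in H1. apply Rabs_def2 in H2.
  assert (t1 * t2 < 1) by (destruct (Rle_dec 0 t1); destruct (Rle_dec 0 t2); nra).
  f_equal. rewrite tan_plus; try (apply cos_ne; lra).
  - rewrite !tan_atan. reflexivity.
  - rewrite !tan_atan. lra.
Qed.

Lemma cdot_chain a b c : cdot a b * cdot b c - ccross a b * ccross b c = cdot b b * cdot a c.
Proof. unfold cdot, ccross; ring. Qed.

Lemma ccross_chain a b c : cdot a b * ccross b c + ccross a b * cdot b c = cdot b b * ccross a c.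
Proof. unfold cdot, ccross; ring. Qed.

Lemma cdot_ccross_sq a b : cdot a b ^ 2 + ccross a b ^ 2 = cdot a a * cdot b b.
Proof. unfold cdot, ccross; ring. Qed.

Lemma Cmod_mul_self a : Cmod a * Cmod a = cdot a a.
Proof. unfold Cmod, cdot. rewrite sqrt_sqrt; nra. Qed.

Lemma near_dir_cdot_pos a b : near_dir a b -> 0 < cdot a b.
Proof. unfold near_dir; intro H. pose proof (Rabs_pos (ccross a b)); lra. Qed.

Lemma near_dir_cdot_self a b : near_dir a b -> 0 < cdot a a /\ 0 < cdot b b.
Proof.
  intro H. apply near_dir_cdot_pos in H. revert H. unfold cdot.
  destruct a as [a1 a2], b as [b1 b2]; simpl; intro H.
  split; [destruct (Req_dec a1 0), (Req_dec a2 0) | destruct (Req_dec b1 0), (Req_dec b2 0)];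
    subst; nra.
Qed.

Lemma near_dir_ratio a b : near_dir a b -> Rabs (ccross a b / cdot a b) < 1.
Proof.
  intro H. pose proof (near_dir_cdot_pos _ _ H).
  unfold Rdiv. rewrite Rabs_mult, Rabs_inv, (Rabs_right (cdot a b)) by lra.
  apply Rmult_lt_reg_r with (cdot a b); auto.
  rewrite Rmult_assoc, Rinv_l by lra. unfold near_dir in H. lra.
Qed.

Lemma angle_add a b c : near_dir a b -> near_dir b c -> angle a b + angle b c = angle a c.
Proof.
  intros Hab Hbc. unfold angle.
  rewrite atan_plus by (apply near_dir_ratio; auto).
  f_equal.
  pose proof (near_dir_cdot_pos _ _ Hab). pose proof (near_dir_cdot_pos _ _ Hbc).
  destruct (near_dir_cdot_self _ _ Hbc) as [Hb _].
  assert (Hprod : ccross a b * ccross b c < cdot a b * cdot b c).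
  { apply Rle_lt_trans with (Rabs (ccross a b) * Rabs (ccross b c)).
    - rewrite <- Rabs_mult. apply Rle_abs.
    - unfold near_dir in *. pose proof (Rabs_pos (ccross a b)).
      pose proof (Rabs_pos (ccross b c)). nra. }
  pose proof (cdot_chain a b c). pose proof (ccross_chain a b c).
  assert (Hac : 0 < cdot a c) by (apply Rmult_lt_reg_l with (cdot b b); lra).
  transitivity ((cdot b b * ccross a c) / (cdot b b * cdot a c)).
  - rewrite <- cdot_chain, <- ccross_chain. field. repeat split; lra.
  - field. lra.
Qed.

Lemma angle_refl a : angle a a = 0.
Proof.
  unfold angle, ccross. replace (fst a * snd a - snd a * fst a) with 0 by ring.
  unfold Rdiv. rewrite Rmult_0_l. apply atan_0.
Qed.

Lemma angle_opp a b : angle (- a)%C (- b)%C = angle a b.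
Proof. unfold angle, ccross, cdot. simpl. f_equal. f_equal; ring. Qed.

Lemma near_dir_polar a b : near_dir a b ->
  cdot a b = Cmod a * Cmod b * cos (angle a b) /\
  ccross a b = Cmod a * Cmod b * sin (angle a b).
Proof.
  intro H. pose proof (near_dir_cdot_pos _ _ H) as Hd.
  unfold angle. rewrite cos_atan, sin_atan.
  set (t := ccross a b / cdot a b).
  assert (Hs : Cmod a * Cmod b = cdot a b * sqrt (1 + t²)).
  { rewrite <- (sqrt_Rsqr (cdot a b)) by lra.
    rewrite <- sqrt_mult_alt by (unfold Rsqr; nra).
    rewrite <- (sqrt_Rsqr (Cmod a * Cmod b)) by (apply Rmult_le_pos; apply Cmod_ge_0).
    f_equal. unfold Rsqr.
    replace (Cmod a * Cmod b * (Cmod a * Cmod b)) with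
      ((Cmod a * Cmod a) * (Cmod b * Cmod b)) by ring.
    rewrite !Cmod_mul_self, <- cdot_ccross_sq. unfold t. field. lra. }
  assert (0 < sqrt (1 + t²)) by (apply sqrt_lt_R0; unfold Rsqr; nra).
  rewrite Hs. unfold t. split; field; auto with real.
Qed.

Fixpoint rsum (f : nat -> R) (n : nat) : R :=
  match n with O => 0 | S n => rsum f n + f n end.

Lemma rsum_ext f g n : (forall k, (k < n)%nat -> f k = g k) -> rsum f n = rsum g n.
Proof. induction n; intro H; simpl; auto. rewrite IHn, H; auto; intros; apply H; lia. Qed.

Lemma rsum_zero f n : (forall k, (k < n)%nat -> f k = 0) -> rsum f n = 0.
Proof. induction n; intro H; simpl; auto. rewrite IHn, H; [ring|lia|intros; apply H; lia]. Qed.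

Lemma rsum_add_range f m n : rsum f (n + m) = rsum f n + rsum (fun k => f (n + k)%nat) m.
Proof.
  induction m; simpl.
  - rewrite Nat.add_0_r; ring.
  - rewrite Nat.add_succ_r. simpl. rewrite IHm. ring.
Qed.

Lemma rsum_telescope f g v n : (forall k, (k < n)%nat -> f k + v (S k) = v k + g k) ->
  rsum f n + v n = v O + rsum g n.
Proof.
  induction n; intro H; simpl; [ring|].
  assert (IH : rsum f n + v n = v O + rsum g n) by (apply IHn; intros; apply H; lia).
  specialize (H n (Nat.lt_succ_diag_r n)). lra.
Qed.

Lemma near_dir_chain_polar (a : nat -> C) m :
  (forall k, (k < m)%nat -> near_dir (a k) (a (S k))) ->
  let th := rsum (fun k => angle (a k) (a (S k))) m in
  cdot (a O) (a m) = Cmod (a O) * Cmod (a m) * cos th /\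
  ccross (a O) (a m) = Cmod (a O) * Cmod (a m) * sin th.
Proof.
  induction m; intro H; simpl.
  - rewrite cos_0, sin_0, Rmult_1_r, Cmod_mul_self. split; [|unfold ccross]; ring.
  - destruct IHm as [I1 I2]; [intros; apply H; lia|].
    assert (G : near_dir (a m) (a (S m))) by (apply H; lia).
    destruct (near_dir_polar _ _ G) as [P1 P2].
    destruct (near_dir_cdot_self _ _ G) as [Hm _].
    pose proof (cdot_chain (a O) (a m) (a (S m))) as J1.
    pose proof (ccross_chain (a O) (a m) (a (S m))) as J2.
    rewrite I1, I2, P1, P2 in J1, J2. rewrite <- Cmod_mul_self in J1, J2, Hm.
    rewrite cos_plus, sin_plus.
    split; apply Rmult_eq_reg_l with (Cmod (a m) * Cmod (a m)); lra.
Qed.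

Lemma Rabs_le_of_sq x y : 0 <= y -> x * x <= y * y -> Rabs x <= y.
Proof.
  intros Hy H. destruct (Rle_dec 0 x).
  - rewrite Rabs_right by lra. nra.
  - rewrite Rabs_left by lra. nra.
Qed.

Lemma cdot_ccross_bound a b :
  Rabs (cdot a b) <= Cmod a * Cmod b /\ Rabs (ccross a b) <= Cmod a * Cmod b.
Proof.
  pose proof (Cmod_ge_0 a); pose proof (Cmod_ge_0 b).
  pose proof (cdot_ccross_sq a b). pose proof (Cmod_mul_self a); pose proof (Cmod_mul_self b).
  assert ((Cmod a * Cmod b) * (Cmod a * Cmod b) = cdot a a * cdot b b) by nra.
  split; apply Rabs_le_of_sq; nra.
Qed.

Lemma near_dir_of_close c a b : 0 < Cmod c ->
  Cmod (a - c)%C < Cmod c / 8 -> Cmod (b - c)%C < Cmod c / 8 -> near_dir a b.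
Proof.
  intros Hc H1 H2. set (e1 := (a - c)%C) in H1. set (e2 := (b - c)%C) in H2.
  assert (D : cdot a b = cdot c c + cdot c e2 + cdot e1 c + cdot e1 e2)
    by (unfold e1, e2, cdot; simpl; ring).
  assert (X : ccross a b = ccross c e2 + ccross e1 c + ccross e1 e2)
    by (unfold e1, e2, ccross; simpl; ring).
  destruct (cdot_ccross_bound c e2) as [A1 B1]. destruct (cdot_ccross_bound e1 c) as [A2 B2].
  destruct (cdot_ccross_bound e1 e2) as [A3 B3].
  apply Rabs_le_between in A1, A2, A3.
  pose proof (Cmod_ge_0 e1); pose proof (Cmod_ge_0 e2).
  rewrite <- Cmod_mul_self in D.
  pose proof (Rabs_triang (ccross c e2 + ccross e1 c) (ccross e1 e2)).
  pose proof (Rabs_triang (ccross c e2) (ccross e1 c)).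
  unfold near_dir. rewrite D, X. nra.
Qed.

Definition rect (s t : R) : Prop := 0 <= s <= 1 /\ 0 <= t <= 4.

Definition continuous_on_rect (h : R -> R -> C) : Prop :=
  forall s t, rect s t -> forall eps, 0 < eps -> exists del, 0 < del /\
    forall s' t', rect s' t' -> Rabs (s' - s) < del -> Rabs (t' - t) < del ->
      Cmod (h s' t' - h s t)%C < eps.

Lemma rect_near_dir_uniform (h : R -> R -> C) :
  continuous_on_rect h -> (forall s t, rect s t -> h s t <> 0%C) ->
  exists d, 0 < d /\ forall s t s' t', rect s t -> rect s' t' ->
    Rabs (s' - s) < d -> Rabs (t' - t) < d -> near_dir (h s t) (h s' t').
Proof.
  intros Hc Hnz.
  assert (Hdel : forall uv : R * R, exists del : posreal, let (u, v) := uv in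
    rect u v -> forall s t, rect s t -> Rabs (s - u) < 2 * del -> Rabs (t - v) < 2 * del ->
    Cmod (h s t - h u v)%C < Cmod (h u v) / 8).
  { intros [u v]. destruct (classic (rect u v)) as [Huv|Huv].
    - assert (0 < Cmod (h u v)) by (apply Cmod_gt_0; auto).
      destruct (Hc u v Huv (Cmod (h u v) / 8)) as [del [Hd P]]; [lra|].
      assert (Hd2 : 0 < del / 2) by lra.
      exists (mkposreal _ Hd2). intros _ s t Hst H1 H2. apply P; auto; simpl in *; lra.
    - exists (mkposreal 1 Rlt_0_1). tauto. }
  (* [d] is a Lebesgue number of the cover of [rect] by these neighbourhoods. *)
  apply choice in Hdel as [del Hdel].
  destruct (compactness_value_2d 0 1 0 4 (fun u v => del (u, v))) as [d Hd].
  exists d. split; [apply cond_pos|].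
  intros s t s' t' Hst Hst' Ds Dt.
  apply NNPP; intro Hng. apply (Hd s t (proj1 Hst) (proj2 Hst)).
  intros [u [v [Hu [Hv [Hsu [Htv Hdu]]]]]]. apply Hng.
  assert (Huv : rect u v) by (split; auto).
  pose proof (cond_pos (del (u, v))).
  pose proof (Rabs_triang (s - u) (s' - s)). pose proof (Rabs_triang (t - v) (t' - t)).
  replace (s - u + (s' - s)) with (s' - u) in * by ring.
  replace (t - v + (t' - t)) with (t' - v) in * by ring.
  apply near_dir_of_close with (h u v); [apply Cmod_gt_0, Hnz, Huv| |];
    apply (Hdel (u, v)); auto; lra.
Qed.

Section GridWinding.

Variable r : nat -> nat -> C.
Variable N : nat.
Hypothesis N_pos : (0 < N)%nat.
Hypothesis near_row : forall j k, (j <= N)%nat -> (k < 2 * N)%nat -> near_dir (r j k) (r j (S k)).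
Hypothesis near_col : forall j k, (j < N)%nat -> (k <= 2 * N)%nat -> near_dir (r j k) (r (S j) k).
Hypothesis first_row_const : forall k, (k <= 2 * N)%nat -> r O k = r O O.
Hypothesis rows_closed : forall j, (j <= N)%nat -> r j (2 * N)%nat = r j O.
Hypothesis last_row_odd : forall k, (k <= N)%nat -> r N (N + k)%nat = (- r N k)%C.

Definition winding j := rsum (fun k => angle (r j k) (r j (S k))) (2 * N).

Lemma winding_first_row : winding O = 0.
Proof.
  apply rsum_zero. intros k Hk.
  rewrite (first_row_const k), (first_row_const (S k)) by lia. apply angle_refl.
Qed.

(* By [angle_add] the angles around each grid square cancel, so the row
   windings telescope. *)
Lemma winding_succ j : (j < N)%nat -> winding (S j) = winding j.
Proof.
  intro Hj. set (v := fun k => angle (r j k) (r (S j) k)).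
  assert (T : winding j + v (2 * N)%nat = v O + winding (S j)).
  { apply rsum_telescope. intros k Hk. unfold v.
    rewrite !angle_add; auto; (apply near_row || apply near_col); lia. }
  assert (v (2 * N)%nat = v O) by (unfold v; rewrite !rows_closed by lia; reflexivity).
  lra.
Qed.

Lemma winding_last_row : winding N = 2 * rsum (fun k => angle (r N k) (r N (S k))) N.
Proof.
  unfold winding. replace (2 * N)%nat with (N + N)%nat by lia. rewrite rsum_add_range.
  rewrite (rsum_ext (fun k => angle (r N (N + k)) (r N (S (N + k))))
                    (fun k => angle (r N k) (r N (S k)))); [ring|].
  intros k Hk. rewrite <- Nat.add_succ_r, !last_row_odd by lia. apply angle_opp.
Qed.

(* Every row winding is 0, yet the last one is twice the angle from [r N 0] to
   [r N N = - r N 0], which would then have cosine 1. *)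
Lemma grid_odd_loop_absurd : False.
Proof.
  assert (W : forall j, (j <= N)%nat -> winding j = 0).
  { induction j; intro Hj; [apply winding_first_row|]. rewrite winding_succ by lia. apply IHj; lia. }
  destruct (near_dir_chain_polar (r N) N) as [P _]; [intros; apply near_row; lia|].
  pose proof (winding_last_row) as WN. rewrite W in WN by lia.
  replace (rsum _ N) with 0 in P by lra. rewrite cos_0 in P.
  replace (r N N) with (r N (N + 0)%nat) in P by (f_equal; lia).
  rewrite last_row_odd, Cmod_opp in P by lia.
  destruct (near_dir_cdot_self _ _ (near_row N O ltac:(lia) ltac:(lia))) as [H0 _].
  rewrite <- Cmod_mul_self in H0. unfold cdot in P, H0. simpl in P. nra.
Qed.

End GridWinding.

Lemma INR_ratio_bounds j m N : (0 < N)%nat -> (j <= m * N)%nat ->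
  0 <= INR j / INR N <= INR m.
Proof.
  intros HN Hj. apply lt_0_INR in HN. apply le_INR in Hj. rewrite mult_INR in Hj.
  pose proof (pos_INR j). split.
  - apply Rdiv_le_0_compat; lra.
  - apply Rmult_le_reg_r with (INR N); auto. unfold Rdiv. rewrite Rmult_assoc, Rinv_l; lra.
Qed.

(* A loop [h 1] with [h 1 (t + 2) = - h 1 t] has odd winding number, so it
   cannot be contracted to the constant loop [h 0] in [C \ {0}]. *)
Lemma rect_odd_loop_absurd (h : R -> R -> C) :
  continuous_on_rect h -> (forall s t, rect s t -> h s t <> 0%C) ->
  (forall t, 0 <= t <= 4 -> h 0 t = h 0 0) ->
  (forall s, 0 <= s <= 1 -> h s 4 = h s 0) ->
  (forall t, 0 <= t <= 2 -> h 1 (t + 2) = (- h 1 t)%C) -> False.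
Proof.
  intros Hc Hnz Hconst Hper Hodd.
  destruct (rect_near_dir_uniform h Hc Hnz) as [d [Hd G]].
  destruct (archimed_cor1 (d / 2)) as [N [HN HN0]]; [lra|].
  assert (HNr : 0 < INR N) by (apply lt_0_INR; auto).
  set (s := fun j : nat => INR j / INR N).
  set (th := fun k : nat => 2 * (INR k / INR N)).
  assert (Hs : forall j, (j <= N)%nat -> 0 <= s j <= 1).
  { intros j Hj. apply (INR_ratio_bounds j 1); lia. }
  assert (Ht : forall k, (k <= 2 * N)%nat -> 0 <= th k <= 4).
  { intros k Hk. pose proof (INR_ratio_bounds k 2 N ltac:(lia) Hk). unfold th. simpl in *. lra. }
  assert (small : forall j, Rabs (s (S j) - s j) < d /\ Rabs (th (S j) - th j) < d /\
    Rabs (s j - s j) < d /\ Rabs (th j - th j) < d).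
  { intro j. pose proof (Rinv_0_lt_compat _ HNr).
    replace (s (S j) - s j) with (/ INR N) by (unfold s; rewrite S_INR; field; lra).
    replace (th (S j) - th j) with (2 * / INR N) by (unfold th; rewrite S_INR; field; lra).
    rewrite !Rminus_diag, Rabs_R0, !Rabs_right by lra. repeat split; lra. }
  assert (Gr : forall j k j' k', (j <= N)%nat -> (k <= 2 * N)%nat -> (j' <= N)%nat ->
     (k' <= 2 * N)%nat -> Rabs (s j' - s j) < d -> Rabs (th k' - th k) < d ->
     near_dir (h (s j) (th k)) (h (s j') (th k'))).
  { intros. apply G; auto; split; auto. }
  apply (grid_odd_loop_absurd (fun j k => h (s j) (th k)) N); auto.
  - intros j k Hj Hk. apply Gr; try lia; apply small.
  - intros j k Hj Hk. apply Gr; try lia; apply small.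
  - intros k Hk. replace (s O) with 0 by (unfold s; simpl; field; lra).
    replace (th O) with 0 by (unfold th; simpl; field; lra). apply Hconst, Ht, Hk.
  - intros j Hj. replace (th (2 * N)%nat) with 4 by (unfold th; rewrite mult_INR; simpl; field; lra).
    replace (th O) with 0 by (unfold th; simpl; field; lra). apply Hper, Hs, Hj.
  - intros k Hk. replace (s N) with 1 by (unfold s; field; lra).
    replace (th (N + k)%nat) with (th k + 2) by (unfold th; rewrite plus_INR; field; lra).
    apply Hodd. pose proof (INR_ratio_bounds k 1 N ltac:(lia) ltac:(lia)). unfold th. simpl in *. lra.
Qed.

(** * Linearly closed subsets of S^3 *)

Lemma sphere3_coords p : sphere3 p <-> cdot (fst p) (fst p) + cdot (snd p) (snd p) = 1.
Proof. unfold sphere3. rewrite <- !Rsqr_pow2, !Rsqr_def, !Cmod_mul_self. tauto. Qed.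

Lemma cdot_self_pos (u : C) : u <> 0%C -> 0 < cdot u u.
Proof.
  destruct u as [u1 u2]. unfold cdot; simpl. intro H.
  destruct (Req_dec u1 0), (Req_dec u2 0); subst; try nra. now contradict H.
Qed.

Open Scope C_scope.

Definition line_point (p q : C2) (t : C) : C2 :=
  (fst p + t * (fst q - fst p), snd p + t * (snd q - snd p)).

Lemma line_point_0 p q : line_point p q 0 = p.
Proof. apply injective_projections; simpl; ring. Qed.

Lemma line_point_1 p q : line_point p q 1 = q.
Proof. apply injective_projections; simpl; ring. Qed.

Lemma abstract_line_through p q : sphere3 p -> sphere3 q -> p <> q ->
  abstract_line (fun w => (exists t, w = line_point p q t) /\ sphere3 w).
Proof.
  intros Sp Sq Hpq.
  exists (fun w => exists t, w = line_point p q t). split; [|split; [|tauto]].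
  - exists p, (fst q - fst p, snd q - snd p). split.
    + intro E. apply Hpq. apply injective_projections.
      * apply (f_equal fst) in E. simpl in E.
        replace (fst q) with (fst p + (fst q - fst p)) by ring. rewrite E. ring.
      * apply (f_equal snd) in E. simpl in E.
        replace (snd q) with (snd p + (snd q - snd p)) by ring. rewrite E. ring.
    + reflexivity.
  - exists p, q. repeat split; auto.
    + exists 0. now rewrite line_point_0.
    + exists 1. now rewrite line_point_1.
Qed.

Definition line_closed (A : C2 -> Prop) : Prop :=
  forall p q t, A p -> A q -> p <> q -> sphere3 (line_point p q t) -> A (line_point p q t).

Lemma linearly_closed_line_closed A : linearly_closed A -> line_closed A.
Proof.
  intros [HS HL] p q t Ap Aq Hpq St.
  apply (HL p q Ap Aq Hpq _ (abstract_line_through p q (HS p Ap) (HS q Aq) Hpq)).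
  - split; auto. exists 0. now rewrite line_point_0.
  - split; auto. exists 1. now rewrite line_point_1.
  - split; auto. now exists t.
Qed.

Definition e0 : C2 := (RtoC 1, RtoC 0).

(* The special unitary map with first column [z] (so it sends [e0] to [z]), and its inverse. *)
Definition su2 (z q : C2) : C2 :=
  (fst q * fst z - snd q * Cconj (snd z), fst q * snd z + snd q * Cconj (fst z)).
Definition su2_inv (z p : C2) : C2 :=
  (Cconj (fst z) * fst p + Cconj (snd z) * snd p, - snd z * fst p + fst z * snd p).

Lemma sphere3_Cconj z : sphere3 z -> Cconj (fst z) * fst z + Cconj (snd z) * snd z = 1.
Proof.
  intro S. apply sphere3_coords in S. destruct z as [[a b] [c d]].
  unfold cdot in S. apply injective_projections; simpl in *; lra.
Qed.

Lemma su2_inv_K z p : sphere3 z -> su2 z (su2_inv z p) = p.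
Proof.
  intro S. pose proof (sphere3_Cconj z S) as Z. unfold su2, su2_inv.
  apply injective_projections; simpl.
  - transitivity (fst p * (Cconj (fst z) * fst z + Cconj (snd z) * snd z)); [ring|].
    rewrite Z; ring.
  - transitivity (snd p * (Cconj (fst z) * fst z + Cconj (snd z) * snd z)); [ring|].
    rewrite Z; ring.
Qed.

Lemma su2_K z q : sphere3 z -> su2_inv z (su2 z q) = q.
Proof.
  intro S. pose proof (sphere3_Cconj z S) as Z. unfold su2, su2_inv.
  apply injective_projections; simpl.
  - transitivity (fst q * (Cconj (fst z) * fst z + Cconj (snd z) * snd z)); [ring|].
    rewrite Z; ring.
  - transitivity (snd q * (Cconj (fst z) * fst z + Cconj (snd z) * snd z)); [ring|].
    rewrite Z; ring.
Qed.

Lemma sphere3_su2 z q : sphere3 z -> sphere3 (su2 z q) <-> sphere3 q.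
Proof.
  intro S. rewrite !sphere3_coords. rewrite sphere3_coords in S.
  destruct z as [[a b] [c d]], q as [[e f] [g h]]. unfold cdot in *. simpl in *.
  match goal with |- ?L = _ <-> _ =>
    replace L with ((e*e + f*f + (g*g + h*h)) * (a*a + b*b + (c*c + d*d)))%R by ring end.
  rewrite S. lra.
Qed.

Lemma su2_line_point z p q t : su2 z (line_point p q t) = line_point (su2 z p) (su2 z q) t.
Proof. apply injective_projections; simpl; ring. Qed.

Lemma su2_e0 z : su2 z e0 = z.
Proof. apply injective_projections; simpl; ring. Qed.

Lemma line_closed_su2 A z : (forall p, A p -> sphere3 p) -> line_closed A -> sphere3 z ->
  line_closed (fun q => A (su2 z q)).
Proof.
  intros HS HL Sz p q t Ap Aq Hpq St. rewrite su2_line_point.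
  apply HL; auto.
  - intro E. apply Hpq. now rewrite <- (su2_K z p Sz), E, su2_K.
  - now rewrite <- su2_line_point, sphere3_su2.
Qed.

(* The complex lines through [e0] are the fibres of [slope]: [p <> e0] lies on
   the line [e0 + C (1, slope p)]. *)
Definition slope (p : C2) : C := snd p / (fst p - 1).
Definition slope_point (z s : C) : C2 := (1 + / s, z / s).

Lemma sub_neq_0 (x y : C) : x <> y -> x - y <> 0.
Proof. intros H E. apply H. replace x with ((x - y) + y) by ring. rewrite E; ring. Qed.

Lemma sub_eq_0 (x y : C) : x - y = 0 -> x = y.
Proof. intro E. replace x with ((x - y) + y) by ring. rewrite E; ring. Qed.

Lemma Cinv_neq_0 (s : C) : s <> 0 -> / s <> 0.
Proof.
  intros H E. assert (E1 : s * / s = 1) by (field; auto).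
  rewrite E, Cmult_0_r in E1. injection E1. lra.
Qed.

Lemma sphere3_slope_point (z s : C) : (fst s = - (1 + cdot z z) / 2)%R ->
  sphere3 (slope_point z s) /\ s <> 0.
Proof.
  destruct z as [c d], s as [a b]. unfold cdot. simpl. intro Ha.
  assert (Hn : (a * a + b * b <> 0)%R) by (assert (a < 0)%R by nra; nra).
  split.
  - apply sphere3_coords. unfold cdot. simpl. subst a. field. simpl in Hn. nra.
  - intro E. injection E. nra.
Qed.

Lemma slope_point_fst (z s : C) : s <> 0 -> fst (slope_point z s) <> 1.
Proof.
  intros Hs E. apply (Cinv_neq_0 _ Hs). simpl in E.
  replace (/ s) with ((1 + / s) - 1) by ring. rewrite E; ring.
Qed.

Lemma slope_slope_point (z s : C) : s <> 0 -> slope (slope_point z s) = z.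
Proof.
  intro Hs. unfold slope, slope_point. simpl.
  replace (1 + / s - 1) with (/ s) by ring. field. auto.
Qed.

Lemma slope_point_slope (p : C2) : fst p <> 1 -> p = slope_point (slope p) (/ (fst p - 1)).
Proof.
  intro H. pose proof (sub_neq_0 _ _ H). unfold slope_point, slope.
  apply injective_projections; simpl; field; auto.
Qed.

Lemma sphere3_fst_1 (p : C2) : sphere3 p -> fst p = 1 -> p = e0.
Proof.
  destruct p as [[a b] [c d]]. rewrite sphere3_coords. unfold cdot. simpl. intros S E.
  injection E as -> ->. assert (c = 0 /\ d = 0)%R as [-> ->] by (split; nra). reflexivity.
Qed.

Lemma slope_eq_e0_on_line (x y : C2) : fst x <> 1 -> fst y <> 1 -> x <> y -> slope x = slope y ->
  exists t, line_point x y t = e0.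
Proof.
  intros Hx Hy Hxy E. pose proof (sub_neq_0 _ _ Hx). pose proof (sub_neq_0 _ _ Hy).
  unfold slope in E. set (u := fst x - 1) in *. set (w := fst y - 1) in *.
  assert (Huw : u - w <> 0).
  { intro E2. apply Hxy. apply sub_eq_0 in E2. apply injective_projections.
    - replace (fst x) with (u + 1) by (unfold u; ring). rewrite E2. unfold w. ring.
    - replace (snd x) with (snd x / u * u) by (field; auto).
      replace (snd y) with (snd y / w * w) by (field; auto). rewrite E. congruence. }
  assert (Ey : snd y = snd x * w / u).
  { replace (snd y) with (snd y / w * w) by (field; auto). rewrite <- E. field. auto. }
  exists (u / (u - w)). unfold line_point, e0. apply injective_projections; simpl.
  - replace (fst y) with (w + 1) by (unfold w; ring).
    replace (fst x) with (u + 1) by (unfold u; ring). field. auto.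
  - rewrite Ey. field. auto.
Qed.

Lemma Cmult_integral_l (a x : C) : a <> 0 -> a * x = 0 -> x = 0.
Proof. intros Ha E. replace x with (/ a * (a * x)) by (field; auto). rewrite E; ring. Qed.

Lemma proportional_of_det0 (d1 d2 e1 e2 : C) : d1 * e2 - d2 * e1 = 0 ->
  ~ (e1 = 0 /\ e2 = 0) -> exists t, d1 = t * e1 /\ d2 = t * e2.
Proof.
  intros Hdet He. destruct (classic (e1 = 0)) as [E1|E1].
  - assert (E2 : e2 <> 0) by tauto. exists (d2 / e2). split; [|field; auto].
    subst e1. rewrite Cmult_0_r.
    apply (Cmult_integral_l e2); auto. rewrite <- Hdet. ring.
  - exists (d1 / e1). split; [field; auto|].
    apply sub_eq_0, (Cmult_integral_l e1); auto.
    replace (e1 * (d2 - d1 / e1 * e2)) with (- (d1 * e2 - d2 * e1)) by (field; auto).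
    rewrite Hdet. ring.
Qed.

Definition affine_level (a b : C) (w : C2) : C := a * (fst w - 1) + b * snd w.

Lemma affine_level_collinear (a b : C) (P Q R : C2) : ~ (a = 0 /\ b = 0) ->
  affine_level a b P = 1 -> affine_level a b Q = 1 -> affine_level a b R = 1 ->
  Q <> R -> exists t, P = line_point Q R t.
Proof.
  unfold affine_level. intros Hab HP HQ HR HQR.
  set (d1 := fst P - fst Q). set (d2 := snd P - snd Q).
  set (e1 := fst R - fst Q). set (e2 := snd R - snd Q).
  assert (Ed : a * d1 + b * d2 = 0).
  { transitivity ((a * (fst P - 1) + b * snd P) - (a * (fst Q - 1) + b * snd Q));
      [unfold d1, d2; ring | rewrite HP, HQ; ring]. }
  assert (Ee : a * e1 + b * e2 = 0).
  { transitivity ((a * (fst R - 1) + b * snd R) - (a * (fst Q - 1) + b * snd Q));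
      [unfold e1, e2; ring | rewrite HR, HQ; ring]. }
  assert (Hdet : d1 * e2 - d2 * e1 = 0).
  { destruct (classic (a = 0)) as [Ha|Ha].
    - apply (Cmult_integral_l b); [tauto|].
      transitivity (d1 * (a * e1 + b * e2) - e1 * (a * d1 + b * d2)); [subst a; ring|].
      rewrite Ed, Ee; ring.
    - apply (Cmult_integral_l a); auto.
      transitivity (e2 * (a * d1 + b * d2) - d2 * (a * e1 + b * e2)); [ring|].
      rewrite Ed, Ee; ring. }
  destruct (proportional_of_det0 d1 d2 e1 e2 Hdet) as [t [T1 T2]].
  { intros [E1 E2]. apply HQR. apply sub_eq_0 in E1, E2. now apply injective_projections. }
  exists t. unfold line_point. fold e1 e2. rewrite <- T1, <- T2.
  apply injective_projections; simpl; unfold d1, d2; ring.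
Qed.

Lemma solve_Re_mul (w2 w3 : C) (c2 c3 : R) : ccross w2 w3 <> 0%R ->
  exists B : C, fst (B * w2) = c2 /\ fst (B * w3) = c3.
Proof.
  intro D. unfold ccross in D.
  exists ((c2 * snd w3 - c3 * snd w2) / ccross w2 w3, (c2 * fst w3 - c3 * fst w2) / ccross w2 w3)%R.
  unfold ccross, Cmult. simpl. split; field; auto.
Qed.

Lemma plane_closure_total (P : C -> Prop) :
  (forall z1 z2 z3, P z2 -> P z3 -> ccross (z2 - z1) (z3 - z1) <> 0%R -> P z1) ->
  forall zx zy, P zx -> P zy -> zx <> zy -> forall z, P z.
Proof.
  intros HP zx zy Px Py Hxy z.
  destruct (Req_dec (ccross (zx - z) (zy - z)) 0) as [Hc|Hc]; [|eauto].
  destruct (classic (z = zx)) as [->|Hz]; auto.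
  set (w := zy - zx). set (u := zx - z).
  assert (Hw : (0 < cdot w w)%R) by (apply cdot_self_pos, sub_neq_0; auto).
  assert (Hu : (0 < cdot u u)%R) by (apply cdot_self_pos, sub_neq_0; auto).
  assert (Huw : ccross u w = 0%R).
  { rewrite <- Hc. unfold u, w, ccross. simpl. ring. }
  (* [z'] is off the line [zx zy] and, as [z] is on it, [z] is off [zx z']. *)
  set (z' := zx + Ci * w).
  assert (Pz' : P z').
  { apply (HP z' zx zy); auto.
    replace (ccross (zx - z') (zy - z')) with (cdot w w) by (unfold z', w, ccross, cdot; simpl; ring).
    lra. }
  apply (HP z zx z'); auto.
  replace (ccross (zx - z) (z' - z)) with (cdot u w) by (unfold z', u, w, ccross, cdot; simpl; ring).
  pose proof (cdot_ccross_sq u w) as L. rewrite Huw in L.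
  intro E. rewrite E in L. nra.
Qed.

Section SlopeFibres.

Variable A : C2 -> Prop.
Hypothesis A_sphere : forall q, A q -> sphere3 q.
Hypothesis A_line_closed : line_closed A.
Hypothesis A_e0 : A e0.

Definition fibre_in (z : C) : Prop :=
  forall q, sphere3 q -> fst q <> 1 -> slope q = z -> A q.

Lemma fibre_in_slope p : A p -> fst p <> 1 -> fibre_in (slope p).
Proof.
  intros Ap Hp q Sq Hq Hz. pose proof (sub_neq_0 _ _ Hp). pose proof (sub_neq_0 _ _ Hq).
  assert (E : line_point e0 p ((fst q - 1) / (fst p - 1)) = q).
  { unfold line_point, e0. apply injective_projections; simpl.
    - field. auto.
    - replace (snd q) with (slope q * (fst q - 1)) by (unfold slope; field; auto).
      rewrite Hz. unfold slope. field. auto. }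
  rewrite <- E. apply A_line_closed; auto; [|now rewrite E].
  intro E0. apply Hp. now rewrite <- E0.
Qed.

(* [affine_level a B] equals [(a + B z) / s] at [slope_point z s], which lies on
   [S^3] iff [Re s = - (1 + |z|^2) / 2].  Choosing [B], then [a], so that both
   hold for [s = a + B z] at [z1], [z2], [z3] puts three such points on one
   complex line. *)
Lemma fibre_in_of_noncollinear z1 z2 z3 :
  fibre_in z2 -> fibre_in z3 -> ccross (z2 - z1) (z3 - z1) <> 0%R -> fibre_in z1.
Proof.
  intros V2 V3 Hd q Sq Hq Hz.
  set (s1 := / (fst q - 1)).
  assert (Hs1 : s1 <> 0) by (apply Cinv_neq_0, sub_neq_0; auto).
  destruct (solve_Re_mul (z2 - z1) (z3 - z1)
              (- (1 + cdot z2 z2) / 2 - fst s1) (- (1 + cdot z3 z3) / 2 - fst s1) Hd)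
    as [B [B2 B3]].
  set (a := s1 - B * z1).
  assert (Level : forall z s : C, s <> 0 -> s = a + B * z ->
    affine_level a B (slope_point z s) = 1).
  { intros z s Hs ->. unfold affine_level, slope_point. simpl. field. auto. }
  assert (Re_s : forall z, fst (a + B * z) = (fst s1 + fst (B * (z - z1))%C)%R)
    by (intro; unfold a; simpl; ring).
  assert (F2 : fst (a + B * z2) = (- (1 + cdot z2 z2) / 2)%R) by (rewrite Re_s, B2; ring).
  assert (F3 : fst (a + B * z3) = (- (1 + cdot z3 z3) / 2)%R) by (rewrite Re_s, B3; ring).
  destruct (sphere3_slope_point _ _ F2) as [SQ Hs2].
  destruct (sphere3_slope_point _ _ F3) as [SR Hs3].
  assert (Hz23 : z2 <> z3).
  { intros ->. apply Hd. unfold ccross. ring. }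
  assert (AQ : A (slope_point z2 (a + B * z2))).
  { apply V2; auto using slope_point_fst, slope_slope_point. }
  assert (AR : A (slope_point z3 (a + B * z3))).
  { apply V3; auto using slope_point_fst, slope_slope_point. }
  assert (QR : slope_point z2 (a + B * z2) <> slope_point z3 (a + B * z3)).
  { intro E. apply Hz23. rewrite <- (slope_slope_point z2 (a + B * z2)), E by auto.
    apply slope_slope_point; auto. }
  assert (Hab : ~ (a = 0 /\ B = 0)).
  { intros [Ha HB]. apply Hs1. replace s1 with (a + B * z1) by (unfold a; ring).
    rewrite Ha, HB. ring. }
  assert (Lq : affine_level a B q = 1).
  { rewrite (slope_point_slope q Hq), Hz. fold s1. apply Level; auto. unfold a. ring. }
  destruct (affine_level_collinear a B q _ _ Hab Lq
              (Level _ _ Hs2 eq_refl) (Level _ _ Hs3 eq_refl) QR) as [t Et].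
  rewrite Et in Sq |- *. apply A_line_closed; auto.
Qed.

Lemma full_of_line_missing_e0 x y : A x -> A y -> x <> y ->
  (forall t, line_point x y t <> e0) -> forall r, sphere3 r -> A r.
Proof.
  intros Ax Ay Hxy Hl r Sr.
  assert (Hx : fst x <> 1).
  { intro E. apply (Hl 0). rewrite line_point_0. apply sphere3_fst_1; auto. }
  assert (Hy : fst y <> 1).
  { intro E. apply (Hl 1). rewrite line_point_1. apply sphere3_fst_1; auto. }
  destruct (classic (fst r = 1)) as [Er|Er].
  - now rewrite (sphere3_fst_1 r Sr Er).
  - assert (Hslope : slope x <> slope y).
    { intro E. destruct (slope_eq_e0_on_line x y Hx Hy Hxy E) as [t Et]. exact (Hl t Et). }
    apply (plane_closure_total fibre_in fibre_in_of_noncollinear (slope x) (slope y)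
             (fibre_in_slope x Ax Hx) (fibre_in_slope y Ay Hy) Hslope (slope r)); auto.
Qed.

End SlopeFibres.

Theorem linearly_closed_full (A : C2 -> Prop) :
  linearly_closed A -> (exists x, A x) ->
  ~ (exists x, forall p, A p <-> p = x) ->
  ~ (exists l, abstract_line l /\ forall p, A p <-> l p) ->
  forall r, sphere3 r -> A r.
Proof.
  intros HA [x Ax] Hpt Hln.
  pose proof (linearly_closed_line_closed A HA) as HL. destruct HA as [HS _].
  destruct (classic (exists y, A y /\ y <> x)) as [[y [Ay Hyx]]|Ny].
  2: { exfalso. apply Hpt. exists x. intro p. split; [|intros ->; auto].
       intro Ap. apply NNPP. intro Hpx. apply Ny. eauto. }
  set (l := fun w => (exists t, w = line_point x y t) /\ sphere3 w).
  destruct (classic (exists z, A z /\ ~ l z)) as [[z [Az Nlz]]|Nz].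
  2: { exfalso. apply Hln. exists l. split; [apply abstract_line_through; auto|].
       intro p. split.
       - intro Ap. apply NNPP. intro Hlp. apply Nz. eauto.
       - intros [[t ->] St]. apply HL; auto. }
  (* Rotate [z] to [e0]; the line through the preimages of [x] and [y] then misses [e0]. *)
  pose proof (HS z Az) as Sz.
  assert (Full : forall q, sphere3 q -> A (su2 z q)).
  { apply (full_of_line_missing_e0 _ (fun q Aq => proj1 (sphere3_su2 z q Sz) (HS _ Aq))
             (line_closed_su2 A z HS HL Sz)) with (su2_inv z x) (su2_inv z y).
    - now rewrite su2_e0.
    - now rewrite su2_inv_K.
    - now rewrite su2_inv_K.
    - intro E. apply (f_equal (su2 z)) in E. rewrite !su2_inv_K in E by exact Sz. auto.
    - intros t Et. apply Nlz. split; auto. exists t.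
      apply (f_equal (su2 z)) in Et. now rewrite su2_line_point, su2_e0, !su2_inv_K in Et. }
  intros r Sr. rewrite <- (su2_inv_K z r Sz). apply Full.
  rewrite <- (sphere3_su2 z); [now rewrite su2_inv_K | exact Sz].
Qed.

Close Scope C_scope.

(** * Small balls of S^3 do not embed in C *)

(* Inverse stereographic projection of [R^3] onto [S^3 \ {(0, 1)}]. *)
Definition stereo (y1 y2 y3 : R) : C2 :=
  let n := y1 * y1 + y2 * y2 + y3 * y3 in
  (@pair C C (2 * y1 / (1 + n), 2 * y2 / (1 + n)) (2 * y3 / (1 + n), (n - 1) / (1 + n))).

Lemma sphere3_stereo y1 y2 y3 : sphere3 (stereo y1 y2 y3).
Proof. apply sphere3_coords. unfold stereo, cdot. simpl. field. nra. Qed.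

Lemma dist2_stereo_lt y1 y2 y3 z1 z2 z3 d : 0 < d ->
  4 * ((y1 - z1) ^ 2 + (y2 - z2) ^ 2 + (y3 - z3) ^ 2) < d * d ->
  dist2 (stereo y1 y2 y3) (stereo z1 z2 z3) < d.
Proof.
  intros Hd H. unfold dist2. rewrite <- (sqrt_square d) by lra. apply sqrt_lt_1_alt.
  rewrite <- !Rsqr_pow2, !Rsqr_def, !Cmod_mul_self.
  set (N := (y1 - z1) ^ 2 + (y2 - z2) ^ 2 + (y3 - z3) ^ 2).
  set (D := (1 + (y1 * y1 + y2 * y2 + y3 * y3)) * (1 + (z1 * z1 + z2 * z2 + z3 * z3))).
  assert (0 <= N) by (unfold N; repeat apply Rplus_le_le_0_compat; apply pow2_ge_0).
  assert (1 <= D) by (unfold D; nra).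
  replace (cdot _ _ + cdot _ _) with (4 * N / D)
    by (unfold N, D, stereo, cdot; simpl; field; split; nra).
  split.
  - apply Rdiv_le_0_compat; lra.
  - apply Rle_lt_trans with (4 * N); [|unfold N; lra].
    apply Rmult_le_reg_r with D; [lra|]. unfold Rdiv. rewrite Rmult_assoc, Rinv_l; nra.
Qed.

Lemma stereo_eq_opp y1 y2 y3 : stereo y1 y2 y3 = stereo (- y1) (- y2) (- y3) ->
  y1 = 0 /\ y2 = 0 /\ y3 = 0.
Proof.
  intro E. set (D := 1 + (y1 * y1 + y2 * y2 + y3 * y3)).
  assert (HD : 0 < D) by (unfold D; nra).
  pose proof (f_equal (fun p => fst (fst p)) E) as E1.
  pose proof (f_equal (fun p => snd (fst p)) E) as E2.
  pose proof (f_equal (fun p => fst (snd p)) E) as E3.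
  unfold stereo in E1, E2, E3. simpl in E1, E2, E3.
  replace (- y1 * - y1 + - y2 * - y2 + - y3 * - y3) with (y1 * y1 + y2 * y2 + y3 * y3) in * by ring.
  fold D in E1, E2, E3.
  apply (f_equal (fun x => x * D)) in E1, E2, E3.
  unfold Rdiv in *. rewrite !Rmult_assoc, !Rinv_l in E1, E2, E3 by lra.
  lra.
Qed.

(* As [t] runs over [0, 4], [(tent t, tent (t - 1))] goes once around the
   square [|x| + |y| = 1]. *)
Definition tent (t : R) : R := Rabs (2 - Rabs (t - 2)) - 1.

Ltac destruct_Rabs :=
  unfold Rabs in *; repeat match goal with |- context [Rcase_abs ?x] => destruct (Rcase_abs x) end.

Lemma tent_lipschitz a b : Rabs (tent a - tent b) <= Rabs (a - b).
Proof.
  unfold tent. replace (Rabs (2 - Rabs (a - 2)) - 1 - (Rabs (2 - Rabs (b - 2)) - 1))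
    with (Rabs (2 - Rabs (a - 2)) - Rabs (2 - Rabs (b - 2))) by ring.
  eapply Rle_trans; [apply Rabs_triang_inv2|].
  replace (2 - Rabs (a - 2) - (2 - Rabs (b - 2))) with (- (Rabs (a - 2) - Rabs (b - 2))) by ring.
  rewrite Rabs_Ropp. eapply Rle_trans; [apply Rabs_triang_inv2|].
  replace (a - 2 - (b - 2)) with (a - b) by ring. lra.
Qed.

Lemma tent_bound t : -1 <= t <= 5 -> Rabs (tent t) <= 1.
Proof. intro. unfold tent. destruct_Rabs; lra. Qed.

Lemma tent_shift2 t : -2 <= t <= 2 -> tent (t + 2) = - tent t.
Proof. intro. unfold tent. destruct_Rabs; lra. Qed.

Lemma tent_4 : tent 4 = tent 0.
Proof. unfold tent. destruct_Rabs; lra. Qed.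

Lemma tent_3 : tent 3 = tent (-1).
Proof. unfold tent. destruct_Rabs; lra. Qed.

Lemma tent_not_both_0 t : 0 <= t <= 4 -> ~ (tent t = 0 /\ tent (t - 1) = 0).
Proof. intros H [H1 H2]. unfold tent in *. revert H1 H2. destruct_Rabs; lra. Qed.

(* The cone from the apex [(0, 0, rho)] ([s = 0]) over the square loop scaled
   by [rho] ([s = 1]), carried into [S^3] by [stereo]; [cone_point (- rho)] is
   its reflection [y |-> - y]. *)
Definition cone_point (rho s t : R) : C2 :=
  stereo (rho * (s * tent t)) (rho * (s * tent (t - 1))) (rho * (1 - s)).

Lemma cone_coords_bound s t : rect s t ->
  (s * tent t) ^ 2 <= 1 /\ (s * tent (t - 1)) ^ 2 <= 1 /\ (1 - s) ^ 2 <= 1.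
Proof.
  intros [Hs Ht].
  assert (B : forall x, Rabs x <= 1 -> (s * x) ^ 2 <= 1).
  { intros x Hx. apply Rabs_le_between in Hx.
    replace ((s * x) ^ 2) with ((s * s) * (x * x)) by ring.
    assert (x * x <= 1) by nra. assert (s * s <= 1) by nra. nra. }
  split; [|split]; [apply B, tent_bound; lra | apply B, tent_bound; lra | nra].
Qed.

Lemma cone_point_near_base rho eps s t : rect s t -> 4 * Rabs rho < eps ->
  dist2 (cone_point rho s t) (stereo 0 0 0) < eps.
Proof.
  intros Hst Heps. destruct (cone_coords_bound s t Hst) as [B1 [B2 B3]].
  pose proof (Rabs_pos rho). pose proof (pow2_abs rho).
  apply dist2_stereo_lt; [lra|].
  replace (4 * _) with (4 * rho ^ 2 * ((s * tent t) ^ 2 + (s * tent (t - 1)) ^ 2 + (1 - s) ^ 2))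
    by ring.
  assert (0 <= rho ^ 2) by apply pow2_ge_0. nra.
Qed.

Lemma scaled_tent_lipschitz s s' a a' : 0 <= s <= 1 -> 0 <= s' <= 1 -> Rabs (tent a') <= 1 ->
  Rabs (s' * tent a' - s * tent a) <= Rabs (s' - s) + Rabs (a' - a).
Proof.
  intros Hs Hs' Hb.
  replace (s' * tent a' - s * tent a) with ((s' - s) * tent a' + s * (tent a' - tent a)) by ring.
  eapply Rle_trans; [apply Rabs_triang|]. rewrite !Rabs_mult, (Rabs_right s) by lra.
  pose proof (tent_lipschitz a' a). pose proof (Rabs_pos (s' - s)).
  pose proof (Rabs_pos (tent a' - tent a)). nra.
Qed.

Lemma pow2_le_of_Rabs_le x c : Rabs x <= c -> x ^ 2 <= c ^ 2.
Proof. intro H. rewrite <- pow2_abs. apply pow_incr. split; [apply Rabs_pos | exact H]. Qed.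

Lemma cone_point_uniform rho : forall del, 0 < del -> exists d, 0 < d /\
  forall s t s' t', rect s t -> rect s' t' -> Rabs (s' - s) < d -> Rabs (t' - t) < d ->
    dist2 (cone_point rho s' t') (cone_point rho s t) < del.
Proof.
  intros del Hdel. pose proof (Rabs_pos rho).
  exists (del / (8 * (Rabs rho + 1))). split; [apply Rdiv_lt_0_compat; lra|].
  intros s t s' t' [Hs Ht] [Hs' Ht'] Ds Dt.
  set (d := del / (8 * (Rabs rho + 1))) in *.
  assert (Hd : 8 * (Rabs rho + 1) * d = del) by (unfold d; field; lra).
  assert (0 < d) by (unfold d; apply Rdiv_lt_0_compat; lra).
  assert (Coord : forall x x', Rabs (x' - x) <= 2 * d ->
    (rho * x' - rho * x) ^ 2 <= (2 * Rabs rho * d) ^ 2).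
  { intros x x' Hx. apply pow2_le_of_Rabs_le.
    rewrite <- Rmult_minus_distr_l, Rabs_mult.
    replace (2 * Rabs rho * d) with (Rabs rho * (2 * d)) by ring. apply Rmult_le_compat_l; lra. }
  assert (L1 : Rabs (s' * tent t' - s * tent t) <= 2 * d).
  { eapply Rle_trans; [apply scaled_tent_lipschitz, tent_bound; lra | lra]. }
  assert (L2 : Rabs (s' * tent (t' - 1) - s * tent (t - 1)) <= 2 * d).
  { eapply Rle_trans; [apply scaled_tent_lipschitz, tent_bound; lra|].
    replace (t' - 1 - (t - 1)) with (t' - t) by ring. lra. }
  assert (L3 : Rabs (1 - s' - (1 - s)) <= 2 * d).
  { replace (1 - s' - (1 - s)) with (- (s' - s)) by ring. rewrite Rabs_Ropp. lra. }
  apply Coord in L1, L2, L3.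
  assert (Rabs rho * d < del / 8) by (rewrite <- Hd; nra).
  assert (0 <= Rabs rho * d) by nra.
  apply dist2_stereo_lt; [lra|]. nra.
Qed.

Lemma cone_point_apex rho t : cone_point rho 0 t = cone_point rho 0 0.
Proof. unfold cone_point. rewrite !Rmult_0_l. reflexivity. Qed.

Lemma cone_point_4 rho s : cone_point rho s 4 = cone_point rho s 0.
Proof.
  unfold cone_point. replace (4 - 1) with 3 by ring. replace (0 - 1) with (-1) by ring.
  now rewrite tent_4, tent_3.
Qed.

Lemma cone_point_base_shift2 rho t : 0 <= t <= 2 ->
  cone_point rho 1 (t + 2) = cone_point (- rho) 1 t.
Proof.
  intro Ht. unfold cone_point.
  replace (t + 2 - 1) with ((t - 1) + 2) by ring.
  rewrite !tent_shift2 by lra. f_equal; ring.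
Qed.

Lemma cone_point_opp_neq rho s t : rho <> 0 -> rect s t ->
  cone_point rho s t <> cone_point (- rho) s t.
Proof.
  intros Hrho [Hs Ht] E. unfold cone_point in E.
  rewrite !Ropp_mult_distr_l_reverse in E.
  apply stereo_eq_opp in E as [E1 [E2 E3]].
  apply Rmult_integral in E1, E2, E3.
  destruct E3 as [|E3]; [tauto|]. replace s with 1 in * by lra.
  destruct E1 as [|E1]; [tauto|]. destruct E2 as [|E2]; [tauto|].
  apply (tent_not_both_0 t Ht). lra.
Qed.

(* [h s t := f (cone_point rho s t) - f (cone_point (- rho) s t)] would contract
   the odd loop [h 1] to the constant loop [h 0] in [C \ {0}]. *)
Lemma ball_not_embeddable (U : C2 -> Prop) (f : C2 -> C) eps : 0 < eps ->
  (forall p, sphere3 p -> dist2 p (stereo 0 0 0) < eps -> U p) -> ~ cont_inj_on U f.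
Proof.
  intros Heps HU [Finj Fc].
  set (rho := eps / 8).
  assert (Hrho : 0 < rho) by (unfold rho; lra).
  assert (InU : forall r s t, Rabs r = rho -> rect s t -> U (cone_point r s t)).
  { intros r s t Hr Hst. apply HU; [apply sphere3_stereo|].
    apply cone_point_near_base; auto. unfold rho in Hr. lra. }
  assert (Hr1 : Rabs rho = rho) by (apply Rabs_right; lra).
  assert (Hr2 : Rabs (- rho) = rho) by (rewrite Rabs_Ropp; auto).
  apply (rect_odd_loop_absurd (fun s t => f (cone_point rho s t) - f (cone_point (- rho) s t))%C).
  - intros s t Hst e He.
    destruct (Fc _ (InU rho s t Hr1 Hst) (e / 2)) as [e1 [He1 F1]]; [lra|].
    destruct (Fc _ (InU (- rho) s t Hr2 Hst) (e / 2)) as [e2 [He2 F2]]; [lra|].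
    destruct (cone_point_uniform rho e1 He1) as [d1 [Hd1 D1]].
    destruct (cone_point_uniform (- rho) e2 He2) as [d2 [Hd2 D2]].
    exists (Rmin d1 d2). split; [now apply Rmin_glb_lt|].
    intros s' t' Hst' Ds Dt.
    pose proof (Rmin_l d1 d2). pose proof (Rmin_r d1 d2).
    specialize (F1 _ (InU rho s' t' Hr1 Hst') (D1 s t s' t' Hst Hst' ltac:(lra) ltac:(lra))).
    specialize (F2 _ (InU (- rho) s' t' Hr2 Hst') (D2 s t s' t' Hst Hst' ltac:(lra) ltac:(lra))).
    replace (f (cone_point rho s' t') - f (cone_point (- rho) s' t')
             - (f (cone_point rho s t) - f (cone_point (- rho) s t)))%C
      with ((f (cone_point rho s' t') - f (cone_point rho s t))
            + - (f (cone_point (- rho) s' t') - f (cone_point (- rho) s t)))%C by ring.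
    eapply Rle_lt_trans; [apply Cmod_triangle|]. rewrite Cmod_opp. lra.
  - intros s t Hst E. apply sub_eq_0 in E.
    apply (Finj _ _ (InU rho s t Hr1 Hst) (InU (- rho) s t Hr2 Hst)) in E.
    apply (cone_point_opp_neq rho s t); auto. lra.
  - intros t _. cbv beta. now rewrite (cone_point_apex rho t), (cone_point_apex (- rho) t).
  - intros s _. cbv beta. now rewrite !cone_point_4.
  - intros t Ht. cbv beta. rewrite !cone_point_base_shift2, Ropp_involutive by lra. ring.
Qed.

Theorem lemma3p5 (A : C2 -> Prop) :
  linearly_closed A ->
  (exists x, A x) ->
  ~ (exists x, forall p, A p <-> p = x) ->
  ~ (exists l, abstract_line l /\ forall p, A p <-> l p) ->
  exists x, A x /\
    forall U : C2 -> Prop, nbhd_in A U x ->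
      ~ (exists f : C2 -> C, cont_inj_on U f).
Proof.
  intros HA Hne Hpt Hln.
  pose proof (linearly_closed_full A HA Hne Hpt Hln) as Hfull.
  exists (stereo 0 0 0). split; [apply Hfull, sphere3_stereo|].
  intros U [_ [_ [eps [Heps HU]]]] [f Hf].
  apply (ball_not_embeddable U f eps Heps); auto.
Qed.
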